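(* There is an absolute constant $C$ such that for every integer $k\ge2$, every set $S$ of $k$-sparse finite real sequences (each having at most $k$ nonzero coordinates, with arbitrary lengths and arbitrary real coordinates) has doubling dimension at most $Ck\log k$ under $d_{\mathrm{ERP}}$.
   Context: Edit Distance with Real Penalty (ERP): for finite real sequences $r,s$ (possibly of different lengths), let $m'$ be the length of the longer one. A gap insertion inserts a zero-valued coordinate at any position. For $p\ge m'$ let $R_p$ (resp. $S_p$) be the set of length-$p$ sequences obtainable from $r$ (resp. $s$) by gap insertions. Then $d_{\mathrm{ERP}}(r,s)=\min_{p\ge m',\ \tilde r\in R_p,\ \tilde s\in S_p}\|\tilde r-\tilde s\|_1$. The doubling constant $\lambda$ of a (pseudo)metric space is the smallest number such that every ball (centered in the space) can be covered by $\lambda$ balls of half the radius; the doubling dimension is $\mathrm{ddim}=\log_2\lambda$. *)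

From Stdlib Require Import Reals Lra List ClassicalEpsilon.
Import ListNotations.
Open Scope R_scope.

Inductive gap_ins : list R -> list R -> Prop :=
| gap_nil : gap_ins [] []
| gap_keep : forall x l l', gap_ins l l' -> gap_ins (x :: l) (x :: l')
| gap_zero : forall l l', gap_ins l l' -> gap_ins l (0 :: l').

(* L1 distance between two sequences (used on sequences of equal length). *)
Fixpoint l1_dist (a b : list R) : R :=
  match a, b with
  | x :: a', y :: b' => Rabs (x - y) + l1_dist a' b'
  | _, _ => 0
  end.

Definition erp_values (r s : list R) (v : R) : Prop :=
  exists (p : nat) (rt st : list R),
    (Nat.max (length r) (length s) <= p)%nat /\
    gap_ins r rt /\ gap_ins s st /\
    length rt = p /\ length st = p /\
    v = l1_dist rt st.

Definition is_glb (E : R -> Prop) (m : R) : Prop :=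
  (forall v, E v -> m <= v) /\ (forall b, (forall v, E v -> b <= v) -> b <= m).

(* d_ERP(r,s): the minimum (= infimum, which is attained) of erp_values r s. *)
Definition d_erp (r s : list R) : R :=
  epsilon (inhabits 0) (fun m => is_glb (erp_values r s) m).

Definition k_sparse (k : nat) (x : list R) : Prop :=
  (length (filter (fun a => if Req_EM_T a 0 then false else true) x) <= k)%nat.

Definition ball (S : list R -> Prop) (d : list R -> list R -> R)
  (c : list R) (rho : R) (y : list R) : Prop := S y /\ d c y <= rho.

(* ddim(S,d) <= D  iff the doubling constant lambda satisfies lambda <= 2^D,
   i.e. some natural N <= 2^D is such that every ball (centered in S) of
   radius rho > 0 is covered by at most N balls of radius rho/2 centered in S. *)
Definition ddim_le (S : list R -> Prop) (d : list R -> list R -> R) (D : R) : Prop :=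
  exists N : nat, INR N <= Rpower 2 D /\
    forall (x : list R) (rho : R), S x -> 0 < rho ->
      exists cs : list (list R),
        (length cs <= N)%nat /\ (forall c, In c cs -> S c) /\
        (forall y, ball S d x rho y -> exists c, In c cs /\ ball S d c (rho / 2) y).

From Stdlib Require Import Reals List.
From Stdlib Require Import Lra Lia Classical ClassicalEpsilon.
Import ListNotations.
Open Scope R_scope.

(* Fix k >= 2, a set S of k-sparse sequences, a center x in S
   and a radius rho > 0; put h = rho / (2k).
   - If d_ERP(x, y) <= rho, some alignment of x and y has L1 cost < 2 rho, so
     every nonzero coordinate of y lies within 2 rho of 0 or of a nonzero
     coordinate of x.  Rounding to the grid of step h around these at most
     k + 1 values (a grid with at most (k+1)(8k+1) points) encodes the
     nonzero part of y, up to error h/2 per coordinate, by a word of length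
     <= k over that grid.
   - Two sparse sequences with the same code have nonzero parts that are
     coordinatewise h-close; aligning the nonzero parts with each other (and
     the zeros with gaps) shows their ERP distance is <= k h = rho / 2.
   So one center per code word covers the ball: at most
   ((k+1)(8k+1)+1)^k <= k^(10k) = 2^((10/ln 2) k ln k) balls of radius rho/2.
   The file first collects facts on gap insertions and the L1 cost, then the
   infimum property of d_erp, the two bounds above, the counting of codes,
   and finally the covering argument. *)

Definition nonzeros (l : list R) : list R :=
  filter (fun a => if Req_EM_T a 0 then false else true) l.

Lemma in_nonzeros a l : In a l -> a <> 0 -> In a (nonzeros l).
Proof.
  intros Ha Ha0. apply filter_In. split; [exact Ha|].
  destruct (Req_EM_T a 0); [contradiction | reflexivity].
Qed.

Lemma gap_ins_nonzeros l : gap_ins (nonzeros l) l.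
Proof.
  induction l as [|a l IH]; simpl; [constructor|].
  destruct (Req_EM_T a 0) as [->|_]; constructor; exact IH.
Qed.

Lemma gap_ins_length a b : gap_ins a b -> (length a <= length b)%nat.
Proof. induction 1; simpl; lia. Qed.

Lemma gap_ins_incl a b : gap_ins a b -> forall z, In z a -> In z b.
Proof. induction 1; simpl; intuition. Qed.

Lemma gap_ins_in_rev a b : gap_ins a b -> forall z, In z b -> z = 0 \/ In z a.
Proof.
  induction 1 as [| x l l' _ IH | l l' _ IH]; simpl; intros z Hz.
  - contradiction.
  - destruct Hz as [->|Hz]; [tauto|]. destruct (IH z Hz); tauto.
  - destruct Hz as [<-|Hz]; [tauto | exact (IH z Hz)].
Qed.

Lemma gap_ins_pad l n : gap_ins l (l ++ repeat 0 n).
Proof.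
  induction l as [|a l IH]; simpl.
  - induction n; simpl; constructor; assumption.
  - constructor; exact IH.
Qed.

Lemma l1_dist_nonneg a b : 0 <= l1_dist a b.
Proof.
  revert b; induction a as [|x a IH]; destruct b as [|y b]; simpl; try lra.
  pose proof (IH b). pose proof (Rabs_pos (x - y)). lra.
Qed.

Lemma l1_dist_in a : forall b, length a = length b -> forall z, In z b ->
  exists w, In w a /\ Rabs (w - z) <= l1_dist a b.
Proof.
  induction a as [|x a IH]; destruct b as [|y b]; simpl; intros Hl z Hz;
    try discriminate; try contradiction.
  pose proof (l1_dist_nonneg a b). pose proof (Rabs_pos (x - y)).
  destruct Hz as [<-|Hz].
  - exists x. split; [left; reflexivity | lra].
  - destruct (IH b ltac:(lia) z Hz) as (w & Hw & Hd).
    exists w. split; [right; exact Hw | lra].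
Qed.

Lemma l1_dist_Forall2 e u v : Forall2 (fun a b => Rabs (a - b) <= e) u v ->
  l1_dist u v <= INR (length u) * e.
Proof.
  induction 1; cbn [l1_dist length]; [simpl; lra|]. rewrite S_INR. lra.
Qed.

Lemma l1_dist_cons_zero a b : l1_dist (0 :: a) (0 :: b) = l1_dist a b.
Proof. simpl. rewrite Rminus_diag, Rabs_R0. ring. Qed.

(* An alignment of a and b lifts, at the same cost, to an alignment of any
   gap-extensions y of a and y' of b: extra zeros are paired with gaps. *)
Lemma alignment_lift a y b y' :
  gap_ins a y -> gap_ins b y' -> length a = length b ->
  exists rt st, gap_ins y rt /\ gap_ins y' st /\ length rt = length st /\
    l1_dist rt st = l1_dist a b.
Proof.
  intros Hy; revert b y'.
  induction Hy as [| x l l' Hl IH | l l' Hl IH]; intros b y' Hy'.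
  - induction Hy' as [| z m m' _ _ | m m' _ IHm]; intros Hlen; simpl in Hlen;
      try discriminate.
    + exists [], []. repeat split; constructor.
    + destruct (IHm Hlen) as (rt & st & Hrt & Hst & Hlen' & Hd).
      exists (0 :: rt), (0 :: st).
      repeat split; try (constructor; assumption); [cbn [length]; lia |].
      rewrite l1_dist_cons_zero; assumption.
  - induction Hy' as [| z m m' Hm _ | m m' _ IHm]; intros Hlen; simpl in Hlen;
      try discriminate.
    + destruct (IH m m' Hm ltac:(lia)) as (rt & st & Hrt & Hst & Hlen' & Hd).
      exists (x :: rt), (z :: st).
      repeat split; try (constructor; assumption); [cbn [length]; lia |].
      simpl; rewrite Hd; reflexivity.
    + destruct (IHm Hlen) as (rt & st & Hrt & Hst & Hlen' & Hd).
      exists (0 :: rt), (0 :: st).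
      repeat split; try (constructor; assumption); [cbn [length]; lia |].
      rewrite l1_dist_cons_zero; assumption.
  - intros Hlen. destruct (IH b y' Hy' Hlen) as (rt & st & Hrt & Hst & Hlen' & Hd).
    exists (0 :: rt), (0 :: st).
    repeat split; try (constructor; assumption); [cbn [length]; lia |].
    rewrite l1_dist_cons_zero; assumption.
Qed.

Lemma erp_values_inhabited r s : exists v, erp_values r s v.
Proof.
  set (p := Nat.max (length r) (length s)).
  exists (l1_dist (r ++ repeat 0 (p - length r)) (s ++ repeat 0 (p - length s))),
    p, (r ++ repeat 0 (p - length r)), (s ++ repeat 0 (p - length s)).
  repeat split; try apply gap_ins_pad; try lia;
    rewrite length_app, repeat_length; unfold p; lia.
Qed.

Lemma d_erp_glb r s : is_glb (erp_values r s) (d_erp r s).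
Proof.
  unfold d_erp. apply epsilon_spec.
  destruct (completeness (fun w => erp_values r s (- w))) as [m [Hub Hlub]].
  - exists 0. intros w (p & rt & st & _ & _ & _ & _ & _ & Hw).
    pose proof (l1_dist_nonneg rt st). lra.
  - destruct (erp_values_inhabited r s) as [v Hv].
    exists (- v). rewrite Ropp_involutive. exact Hv.
  - exists (- m). split.
    + intros v Hv. assert (- v <= m) by (apply Hub; rewrite Ropp_involutive; exact Hv).
      lra.
    + intros b Hb. assert (m <= - b); [|lra].
      apply Hlub. intros w Hw. specialize (Hb _ Hw). lra.
Qed.

Lemma d_erp_le_alignment r s rt st :
  gap_ins r rt -> gap_ins s st -> length rt = length st ->
  d_erp r s <= l1_dist rt st.
Proof.
  intros Hr Hs Hlen. apply (proj1 (d_erp_glb r s)).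
  exists (length rt), rt, st.
  pose proof (gap_ins_length _ _ Hr). pose proof (gap_ins_length _ _ Hs).
  repeat split; auto; lia.
Qed.

Lemma d_erp_lt_alignment r s e : d_erp r s < e ->
  exists rt st, gap_ins r rt /\ gap_ins s st /\ length rt = length st /\
    l1_dist rt st < e.
Proof.
  intros Hd. apply NNPP. intros Hno.
  assert (e <= d_erp r s); [|lra].
  apply (proj2 (d_erp_glb r s)). intros v (p & rt & st & _ & Hr & Hs & Hrt & Hst & ->).
  destruct (Rlt_le_dec (l1_dist rt st) e) as [Hlt|Hge]; [|exact Hge].
  exfalso. apply Hno. exists rt, st. repeat split; auto; lia.
Qed.

Lemma d_erp_le_nonzeros y y' : length (nonzeros y) = length (nonzeros y') ->
  d_erp y y' <= l1_dist (nonzeros y) (nonzeros y').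
Proof.
  intros Hlen.
  destruct (alignment_lift _ _ _ _ (gap_ins_nonzeros y) (gap_ins_nonzeros y') Hlen)
    as (rt & st & Hrt & Hst & Hlen' & Hd).
  rewrite <- Hd. exact (d_erp_le_alignment _ _ _ _ Hrt Hst Hlen').
Qed.

Lemma nonzeros_near x y e : d_erp x y < e ->
  forall a, In a (nonzeros y) -> exists b, In b (0 :: nonzeros x) /\ Rabs (a - b) < e.
Proof.
  intros Hd a Ha.
  destruct (d_erp_lt_alignment _ _ _ Hd) as (rt & st & Hrt & Hst & Hlen & Hcost).
  apply filter_In in Ha as [Ha _].
  destruct (l1_dist_in rt st Hlen a (gap_ins_incl _ _ Hst a Ha)) as (b & Hb & Hab).
  exists b. split.
  - destruct (gap_ins_in_rev _ _ Hrt b Hb) as [->|Hbx]; [left; reflexivity|].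
    destruct (Req_EM_T b 0) as [->|Hb0]; [left; reflexivity|].
    right. exact (in_nonzeros _ _ Hbx Hb0).
  - rewrite Rabs_minus_sym. lra.
Qed.

Lemma round_to_multiple h L s : 0 < h -> 0 <= s <= INR L * h ->
  exists n, (n <= L)%nat /\ Rabs (s - INR n * h) <= h / 2.
Proof.
  intros Hh. revert s; induction L as [|L IH]; intros s Hs.
  - exists 0%nat. split; [lia|]. simpl in *. apply Rabs_le. lra.
  - rewrite S_INR in Hs.
    destruct (Rle_dec s (INR L * h)) as [Hle|Hgt].
    + destruct (IH s (conj (proj1 Hs) Hle)) as (n & Hn & Hr). exists n. split; [lia | exact Hr].
    + destruct (Rle_dec s (INR L * h + h / 2)).
      * exists L. split; [lia|]. apply Rabs_le. lra.
      * exists (S L). split; [lia|]. rewrite S_INR. apply Rabs_le. lra.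
Qed.

Definition grid (V : list R) (h : R) (M : nat) : list R :=
  flat_map (fun v => map (fun n => v + (INR n - INR M) * h) (seq 0 (2 * M + 1))) V.

Lemma flat_map_length_const {A B} (f : A -> list B) c l :
  (forall a, length (f a) = c) -> length (flat_map f l) = (length l * c)%nat.
Proof. intros Hf; induction l as [|a l IH]; simpl; auto. rewrite length_app, Hf, IH. lia. Qed.

Lemma grid_length V h M : length (grid V h M) = (length V * (2 * M + 1))%nat.
Proof.
  apply flat_map_length_const. intros v. rewrite length_map, length_seq. reflexivity.
Qed.

Lemma grid_approx V h M a b : 0 < h -> In b V -> Rabs (a - b) <= INR M * h ->
  exists q, In q (grid V h M) /\ Rabs (a - q) <= h / 2.
Proof.
  intros Hh Hb Hab.
  assert (Hbetween : - (INR M * h) <= a - b <= INR M * h).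
  { split; [|exact (Rle_trans _ _ _ (Rle_abs _) Hab)].
    rewrite <- Rabs_Ropp in Hab. pose proof (Rle_abs (- (a - b))). lra. }
  destruct (round_to_multiple h (2 * M) (a - b + INR M * h) Hh) as (n & Hn & Hr).
  { rewrite mult_INR. simpl INR. lra. }
  exists (b + (INR n - INR M) * h). split.
  - apply in_flat_map. exists b. split; [exact Hb|].
    apply in_map_iff. exists n. split; [reflexivity | apply in_seq; lia].
  - replace (a - (b + (INR n - INR M) * h)) with (a - b + INR M * h - INR n * h) by ring.
    exact Hr.
Qed.

Fixpoint words_upto (G : list R) (n : nat) : list (list R) :=
  match n with
  | O => [[]]
  | S n' => [] :: flat_map (fun q => map (cons q) (words_upto G n')) G
  end.

Lemma words_upto_length G n : (length (words_upto G n) <= (length G + 1) ^ n)%nat.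
Proof.
  induction n as [|n IH]; simpl; [lia|].
  rewrite (flat_map_length_const _ (length (words_upto G n))) by (intros; apply length_map).
  pose proof (Nat.pow_nonzero (length G + 1) n ltac:(lia)). nia.
Qed.

Lemma words_upto_complete G n : forall w, (length w <= n)%nat ->
  (forall q, In q w -> In q G) -> In w (words_upto G n).
Proof.
  induction n as [|n IH]; intros w Hw HG; destruct w as [|q w]; simpl in *; auto; try lia.
  right. apply in_flat_map. exists q. split; [auto|].
  apply in_map, IH; [lia | auto].
Qed.

Lemma choose_Forall2 {A B} (P : A -> B -> Prop) u :
  (forall a, In a u -> exists b, P a b) -> exists g, Forall2 P u g.
Proof.
  induction u as [|a u IH]; intros H.
  - exists []; constructor.
  - destruct (H a (or_introl eq_refl)) as [b Hb].
    destruct IH as [g Hg]; [intros; apply H; right; assumption|].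
    exists (b :: g); constructor; assumption.
Qed.

Definition code_close (h : R) (g y : list R) : Prop :=
  Forall2 (fun a q => Rabs (a - q) <= h / 2) (nonzeros y) g.

Lemma code_close_trans h g c y : code_close h g c -> code_close h g y ->
  Forall2 (fun a b => Rabs (a - b) <= h) (nonzeros c) (nonzeros y).
Proof.
  unfold code_close. generalize (nonzeros c) (nonzeros y). intros u v Hu.
  revert v; induction Hu as [|a q u g Haq _ IH]; intros v Hv;
    inversion Hv as [|b q' v' g' Hbq Hv' Hb Hg]; subst; constructor; auto.
  replace (a - b) with ((a - q) + - (b - q)) by ring.
  pose proof (Rabs_triang (a - q) (- (b - q))) as Ht. rewrite Rabs_Ropp in Ht. lra.
Qed.

Lemma code_close_d_erp k h g c y : 0 <= h -> k_sparse k c ->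
  code_close h g c -> code_close h g y -> d_erp c y <= INR k * h.
Proof.
  intros Hh Hc Hgc Hgy.
  pose proof (code_close_trans _ _ _ _ Hgc Hgy) as Hcy.
  apply (Rle_trans _ _ _ (d_erp_le_nonzeros _ _ (Forall2_length Hcy))).
  apply (Rle_trans _ _ _ (l1_dist_Forall2 _ _ _ Hcy)).
  apply Rmult_le_compat_r; [exact Hh | apply le_INR, Hc].
Qed.

Lemma ball_point_has_code k x y rho : (1 <= k)%nat -> 0 < rho ->
  k_sparse k y -> d_erp x y <= rho ->
  exists g, In g (words_upto (grid (0 :: nonzeros x) (rho / (2 * INR k)) (4 * k)) k) /\
    code_close (rho / (2 * INR k)) g y.
Proof.
  intros Hk Hrho Hy Hd.
  set (h := rho / (2 * INR k)). set (G := grid (0 :: nonzeros x) h (4 * k)).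
  assert (HK : 0 < INR k) by (apply lt_0_INR; lia).
  assert (Hh : 0 < h) by (unfold h; apply Rdiv_lt_0_compat; lra).
  assert (Hwidth : INR (4 * k) * h = 2 * rho)
    by (unfold h; rewrite mult_INR; simpl; field; lra).
  assert (Hround : forall a, In a (nonzeros y) -> exists q, In q G /\ Rabs (a - q) <= h / 2).
  { intros a Ha.
    destruct (nonzeros_near x y (2 * rho) ltac:(lra) a Ha) as (b & Hb & Hab).
    apply (grid_approx _ _ _ a b Hh Hb). lra. }
  destruct (choose_Forall2 _ _ Hround) as [g Hg].
  exists g. split.
  - apply words_upto_complete.
    + rewrite <- (Forall2_length Hg). exact Hy.
    + intros q Hq. clear -Hg Hq.
      induction Hg as [|a q' u g' Haq _ IH]; [contradiction|].
      destruct Hq as [<-|Hq]; [apply Haq | exact (IH Hq)].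
  - eapply Forall2_impl; [|exact Hg]. intros a q [_ Haq]. exact Haq.
Qed.

Lemma representatives_of_codes {A} (S Y : list R -> Prop) (P : A -> list R -> Prop)
  (W : list A) (x0 : list R) :
  S x0 -> (forall y, Y y -> S y) -> (forall y, Y y -> exists w, In w W /\ P w y) ->
  exists cs, (length cs <= length W)%nat /\ (forall c, In c cs -> S c) /\
    forall y, Y y -> exists c w, In c cs /\ P w c /\ P w y.
Proof.
  intros Hx0 HYS HW.
  set (rep := fun w => epsilon (inhabits x0)
                        (fun z => S z /\ ((exists y, S y /\ P w y) -> P w z))).
  assert (Hrep : forall w, S (rep w) /\ ((exists y, S y /\ P w y) -> P w (rep w))).
  { intros w. apply epsilon_spec.
    destruct (classic (exists y, S y /\ P w y)) as [[y [Sy Py]]|Hno].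
    - exists y. split; [exact Sy | intros _; exact Py].
    - exists x0. split; [exact Hx0 | intros H; contradiction]. }
  exists (map rep W). split; [|split].
  - rewrite length_map. lia.
  - intros c Hc. apply in_map_iff in Hc as (w & <- & _). apply Hrep.
  - intros y Hy. destruct (HW y Hy) as (w & Hw & Pwy).
    exists (rep w), w. split; [apply in_map; exact Hw|].
    split; [apply (proj2 (Hrep w)); exists y; auto | exact Pwy].
Qed.

Lemma sparse_ball_cover k (S : list R -> Prop) x rho : (1 <= k)%nat ->
  (forall y, S y -> k_sparse k y) -> S x -> 0 < rho ->
  exists cs, (length cs <= ((k + 1) * (8 * k + 1) + 1) ^ k)%nat /\
    (forall c, In c cs -> S c) /\
    (forall y, ball S d_erp x rho y -> exists c, In c cs /\ ball S d_erp c (rho / 2) y).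
Proof.
  intros Hk HS Hx Hrho.
  set (h := rho / (2 * INR k)).
  set (W := words_upto (grid (0 :: nonzeros x) h (4 * k)) k).
  assert (HK : 0 < INR k) by (apply lt_0_INR; lia).
  destruct (representatives_of_codes S (ball S d_erp x rho) (code_close h) W x Hx)
    as (cs & Hlen & HcS & Hcover).
  - intros y [Sy _]. exact Sy.
  - intros y [Sy Dy]. exact (ball_point_has_code k x y rho Hk Hrho (HS y Sy) Dy).
  - exists cs. split; [|split; [exact HcS|]].
    + apply (Nat.le_trans _ _ _ Hlen), (Nat.le_trans _ _ _ (words_upto_length _ _)).
      apply Nat.pow_le_mono_l. rewrite grid_length. cbn [length].
      pose proof (HS x Hx) as Hsx. unfold k_sparse in Hsx. unfold nonzeros. nia.
    + intros y Hy. destruct (Hcover y Hy) as (c & g & Hc & Hgc & Hgy).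
      exists c. split; [exact Hc|]. split; [exact (proj1 Hy)|].
      replace (rho / 2) with (INR k * h) by (unfold h; field; lra).
      apply (code_close_d_erp k h g c y); [unfold h; apply Rlt_le, Rdiv_lt_0_compat; lra
        | apply HS, HcS, Hc | exact Hgc | exact Hgy].
Qed.

Lemma Rpower_2_k_ln_k k : (1 <= k)%nat ->
  Rpower 2 (10 / ln 2 * INR k * ln (INR k)) = INR (k ^ (10 * k)).
Proof.
  intros Hk.
  assert (Hl2 : 0 < ln 2) by (rewrite <- ln_1; apply ln_increasing; lra).
  assert (HK : 0 < INR k) by (apply lt_0_INR; lia).
  unfold Rpower.
  replace (10 / ln 2 * INR k * ln (INR k) * ln 2) with (INR (10 * k) * ln (INR k))
    by (rewrite mult_INR; simpl; field; lra).
  change (exp (INR (10 * k) * ln (INR k))) with (Rpower (INR k) (INR (10 * k))).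
  rewrite Rpower_pow by exact HK. symmetry. apply pow_INR.
Qed.

Lemma code_count_le k : (2 <= k)%nat ->
  (((k + 1) * (8 * k + 1) + 1) ^ k <= k ^ (10 * k))%nat.
Proof.
  intros Hk. rewrite Nat.mul_comm, Nat.pow_mul_r. apply Nat.pow_le_mono_l.
  assert (H8 : (2 ^ 8 <= k ^ 8)%nat) by (apply Nat.pow_le_mono_l; lia).
  replace (k ^ 10)%nat with (k ^ 8 * (k * k))%nat by (simpl; lia).
  change (2 ^ 8)%nat with 256%nat in H8.
  generalize dependent (k ^ 8)%nat. intros. nia.
Qed.

Theorem mainTheorem11 :
  exists C : R, forall k : nat, (2 <= k)%nat ->
    forall S : list R -> Prop, (forall x, S x -> k_sparse k x) ->
      ddim_le S d_erp (C * INR k * ln (INR k)).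
Proof.
  exists (10 / ln 2). intros k Hk S HS.
  exists (((k + 1) * (8 * k + 1) + 1) ^ k)%nat. split.
  - rewrite Rpower_2_k_ln_k by lia. apply le_INR, code_count_le, Hk.
  - intros x rho Hx Hrho. apply sparse_ball_cover; auto; lia.
Qed.
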